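(* There is an absolute constant $c>0$ such that for every prime $p$ and every divisor $m$ of $p-1$ with $d=(p-1)/m\ge2$, we have $\vartheta(m,p)\ge c\,p^{1/\varphi(d)}$.
   Context: For a prime $p$ and a divisor $m$ of $p-1$, $\mathcal G_m\subseteq\mathbb F_p^*$ is the unique multiplicative subgroup of index $m$ (order $d=(p-1)/m$). For $\lambda\in\mathbb F_p^*$, $\rho(\lambda,p)=\min\{rs: r,s\text{ positive integers},\ r\equiv\lambda s\pmod p\}$, and $\vartheta(m,p)=\min_{\lambda\in\mathcal G_m,\ \lambda\ne1}\rho(\lambda,p)$. $\varphi$ is Euler's function. *)

From Stdlib Require Import Reals.
From mathcomp Require Import all_boot.

Set Implicit Arguments.
Unset Strict Implicit.
Unset Printing Implicit Defensive.

(* Elements of F_p^* are represented by naturals 1 <= l < p.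
   G_m (index m, order d = (p-1)/m) = { l : l^d = 1 mod p }. *)
Definition in_Gm (m p l : nat) : bool :=
  (0 < l < p) && (l ^ ((p - 1) %/ m) == 1 %[mod p]).

Definition rho_pred (l p : nat) : pred nat := fun n =>
  [exists r : 'I_n.+1, exists s : 'I_n.+1,
     [&& 0 < (r : nat), 0 < (s : nat), r * s == n & r == l * s %[mod p]]].

Lemma rho_ex (l p : nat) : 0 < l -> exists n, rho_pred l p n.
Proof.
move=> hl; exists l; apply/existsP; exists (Ordinal (ltnSn l)).
apply/existsP; exists (@Ordinal l.+1 1 (hl : 1 < l.+1)) => /=.
rewrite hl /=. by rewrite !muln1 !eqxx.
Qed.

Definition rho (l p : nat) : nat :=
  match ltnP 0 l with
  | LtnNotGeq hl => ex_minn (rho_ex p hl)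
  | GeqNotLtn _ => 0
  end.

(* theta(m,p) = min over l in G_m, l <> 1, of rho(l,p).  The default value
   p*p of the big min is never reached when d >= 2 (G_m has a non-identity
   element), since every rho(l,p) <= l < p. *)
Definition theta (m p : nat) : nat :=
  \big[minn/(p * p)]_(2 <= l < p | in_Gm m p l) rho l p.

From Stdlib Require Import Reals Lra.
From mathcomp Require Import all_boot all_order all_algebra all_field.
From mathcomp Require Import ring.

Set Implicit Arguments.
Unset Strict Implicit.
Unset Printing Implicit Defensive.

Import Order.TTheory GRing.Theory Num.Theory.

(* An element l <> 1 of G_m is a root of X^d - 1 = prod_(n | d) Phi_n, hence
   modulo p a root of some Phi_n with n <> 1, n | d.  If r = l s (mod p) and
   p does not divide s, the homogenized value s^phi(n) Phi_n(r/s) is an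
   integer divisible by p.  It is nonzero, since Phi_n has no nonnegative real
   root, and bounded by (r + s)^phi(n) <= (2 r s)^phi(d), since it is a
   product of phi(n) factors r - z s with |z| = 1.  So p <= (2 r s)^phi(d),
   which also holds when p divides s, as then p divides r.  Hence
   theta(m, p) >= p^(1/phi(d)) / 2. *)

Lemma dvdn_leq_totient d n : 0 < n -> d %| n -> totient d <= totient n.
Proof.
move=> n_gt0 d_dvd_n; have d_gt0 := dvdn_gt0 n_gt0 d_dvd_n.
rewrite !totientE //.
have primes_d : perm_eq (primes d) [seq q <- primes n | q \in primes d].
  apply: uniq_perm; rewrite ?filter_uniq ?primes_uniq // => q.
  rewrite mem_filter andb_idr // mem_primes => /and3P[q_pr _ q_dvd_d].
  by rewrite mem_primes q_pr n_gt0 (dvdn_trans q_dvd_d).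
rewrite (perm_big _ primes_d) /= big_filter big_mkcond /=.
rewrite big_seq [leqRHS]big_seq; apply: leq_prod => q.
rewrite mem_primes => /and3P[q_pr _ _]; have q_gt1 := prime_gt1 q_pr.
case: ifP => _; last by rewrite muln_gt0 expn_gt0 (ltnW q_gt1) -subn1 subn_gt0 q_gt1.
rewrite leq_mul2l leq_pexp2l ?orbT ?(ltnW q_gt1) // -!subn1 leq_sub2r //.
exact: dvdn_leq_log.
Qed.

Lemma card_coprime_ord n : #|[pred k : 'I_n | coprime k n]| = totient n.
Proof.
rewrite totient_count_coprime -big_mkcond big_mkord -sum1_card.
by apply: eq_bigl => k; rewrite coprime_sym.
Qed.

Section Cyclotomic.
Local Open Scope ring_scope.

Lemma Cyclotomic1 : 'Phi_1 = 'X - 1.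
Proof. by have := prod_Cyclotomic (ltnSn 0); rewrite big_cons big_nil mulr1. Qed.

(* Division-free, so that it can be evaluated in int. *)
Definition homog_horner (R : nzRingType) (P : {poly int}) (e : nat) (x y : R) :=
  \sum_(i < e.+1) (P`_i)%:~R * x ^+ i * y ^+ (e - i).

Lemma rmorph_homog_horner (R S : nzRingType) (f : {rmorphism R -> S})
    (P : {poly int}) e x y :
  f (homog_horner P e x y) = homog_horner P e (f x) (f y).
Proof.
by rewrite rmorph_sum; apply: eq_bigr => i _; rewrite !rmorphM !rmorphXn rmorph_int.
Qed.

Lemma homog_hornerE (F : fieldType) (P : {poly int}) e (x y : F) :
  y != 0 -> (size P <= e.+1)%N ->
  homog_horner P e x y = y ^+ e * (map_poly intr P).[x / y].
Proof.
move=> y_neq0 size_P; rewrite (@horner_coef_wide _ e.+1); last first.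
  by rewrite (leq_trans (size_poly _ _)).
rewrite mulr_sumr; apply: eq_bigr => i _; rewrite coef_map /=.
have le_ie : (i <= e)%N by rewrite -ltnS.
rewrite -[in y ^+ e](subnK le_ie) exprD expr_div_n.
by field; rewrite expf_neq0.
Qed.

Lemma Cyclotomic_horner_neq0 n (t : algC) :
  n != 1%N -> 0 <= t -> (map_poly intr 'Phi_n).[t] != 0.
Proof.
move=> n_neq1 t_ge0; have [-> | n_gt0] := posnP n.
  by rewrite Cyclotomic0 rmorph1 hornerC oner_eq0.
have [z prim_z] := C_prim_root_exists n_gt0.
rewrite (Cintr_Cyclotomic prim_z); apply: contra n_neq1 => root_t.
have prim_t : n.-primitive_root t by rewrite -(root_cyclotomic prim_z).
have t_eq1 : t = 1.
  by apply/eqP; rewrite -(pexpr_eq1 n_gt0) // prim_expr_order.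
by rewrite -dvdn1 (prim_order_dvd prim_t) t_eq1 expr1n.
Qed.

Lemma norm_Cyclotomic_horner_le n (t : algC) :
  0 <= t -> `|(map_poly intr 'Phi_n).[t]| <= (t + 1) ^+ totient n.
Proof.
move=> t_ge0; have [-> | n_gt0] := posnP n.
  by rewrite Cyclotomic0 rmorph1 hornerC normr1.
have [z prim_z] := C_prim_root_exists n_gt0.
have z_norm1 : `|z| = 1.
  by apply/eqP; rewrite -(pexpr_eq1 n_gt0) // -normrX prim_expr_order ?normr1.
rewrite (Cintr_Cyclotomic prim_z) horner_prod normr_prod.
rewrite -card_coprime_ord -prodr_const; apply: ler_prod => k _.
rewrite normr_ge0 hornerXsubC (le_trans (ler_normB _ _)) //.
by rewrite normrX z_norm1 expr1n ger0_norm.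
Qed.

Lemma homog_Cyclotomic_neq0 n (x y : algC) :
  n != 1%N -> 0 <= x -> 0 < y -> homog_horner 'Phi_n (totient n) x y != 0.
Proof.
move=> n_neq1 x_ge0 y_gt0; have y_neq0 := lt0r_neq0 y_gt0.
rewrite homog_hornerE ?size_Cyclotomic // mulf_neq0 ?expf_neq0 //.
exact: Cyclotomic_horner_neq0 (divr_ge0 x_ge0 (ltW y_gt0)).
Qed.

Lemma norm_homog_Cyclotomic_le n (x y : algC) :
  0 <= x -> 0 < y ->
  `|homog_horner 'Phi_n (totient n) x y| <= (x + y) ^+ totient n.
Proof.
move=> x_ge0 y_gt0; have y_neq0 := lt0r_neq0 y_gt0.
rewrite homog_hornerE ?size_Cyclotomic // normrM normrX gtr0_norm //.
have -> : x + y = y * (x / y + 1) by field.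
rewrite exprMn ler_pM2l ?exprn_gt0 //.
exact: norm_Cyclotomic_horner_le (divr_ge0 x_ge0 (ltW y_gt0)).
Qed.

Lemma prime_leq_homog_Cyclotomic p n r s :
  prime p -> n != 1%N -> ~~ (p %| s)%N ->
  root (map_poly intr 'Phi_n : {poly 'F_p}) (r%:R / s%:R) ->
  (p <= (r + s) ^ totient n)%N.
Proof.
move=> p_pr n_neq1 p_ndvd_s root_rs.
have s_gt0 : (0 < s)%N by rewrite lt0n; apply: contraNneq p_ndvd_s => ->.
have s_pos : 0 < s%:R :> algC by rewrite ltr0n.
pose N : int := homog_horner 'Phi_n (totient n) r%:R s%:R.
have N_C : N%:~R = homog_horner 'Phi_n (totient n) (r%:R : algC) s%:R.
  by rewrite rmorph_homog_horner !rmorph_nat.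
have N_Fp : N%:~R = 0 :> 'F_p.
  have s_neq0 : s%:R != 0 :> 'F_p by rewrite -(dvdn_pcharf (pchar_Fp p_pr)).
  rewrite rmorph_homog_horner !rmorph_nat homog_hornerE ?size_Cyclotomic //.
  by rewrite (rootP root_rs) mulr0.
have N_neq0 : N != 0.
  apply/eqP => N_eq0.
  have := homog_Cyclotomic_neq0 n_neq1 (ler0n _ r) s_pos.
  by rewrite -N_C N_eq0 rmorph0 eqxx.
have p_dvd_N : (p %| `|N|)%N.
  by have := dvdz_pcharf (pchar_Fp p_pr) N; rewrite N_Fp eqxx dvdzE.
have N_le : (`|N| <= (r + s) ^ totient n)%N.
  rewrite -lez_nat abszE -(ler_int algC) intr_norm N_C.
  rewrite -[X in _ <= X]pmulrn natrX natrD.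
  exact: norm_homog_Cyclotomic_le (ler0n _ r) s_pos.
by apply: leq_trans (dvdn_leq _ p_dvd_N) N_le; rewrite absz_gt0.
Qed.

Lemma unity_root_Cyclotomic (R : idomainType) d (x : R) :
  (0 < d)%N -> x ^+ d = 1 -> x != 1 ->
  exists2 n, (n %| d)%N & (n != 1%N) && root (map_poly intr 'Phi_n) x.
Proof.
move=> d_gt0 xd_eq1 x_neq1.
have : root (map_poly intr ('X^d - 1)) x.
  by rewrite rmorphB /= map_polyXn rmorph1 rootE !hornerE xd_eq1 subrr.
rewrite -(prod_Cyclotomic d_gt0) rmorph_prod /root horner_prod prodf_seq_eq0.
case/hasP => n; rewrite -dvdn_divisors // => n_dvd_d /= root_n.
exists n; rewrite // root_n andbT; apply: contraNneq x_neq1 => n_eq1.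
move: root_n; rewrite n_eq1 Cyclotomic1 rmorphB /= map_polyX rmorph1.
by rewrite !hornerE subr_eq0.
Qed.

Lemma prime_leq_witness_bound p d l r s :
  prime p -> (0 < d)%N -> (1 < l < p)%N -> l ^ d = 1 %[mod p] ->
  (0 < r)%N -> (0 < s)%N -> r = l * s %[mod p] ->
  (p <= (2 * (r * s)) ^ totient d)%N.
Proof.
move=> p_pr d_gt0 /andP[l_gt1 l_lt_p] ld_eq1 r_gt0 s_gt0 rs_mod.
have phi_gt0 : (0 < totient d)%N by rewrite totient_gt0.
have rs_pos : (0 < 2 * (r * s))%N by rewrite !muln_gt0 r_gt0 s_gt0.
have [p_dvd_s | p_ndvd_s] := boolP (p %| s)%N.
  have p_dvd_r : (p %| r)%N by rewrite /dvdn rs_mod -/(dvdn p (l * s)) dvdn_mull.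
  apply: leq_trans (dvdn_leq r_gt0 p_dvd_r) _.
  apply: leq_trans (leq_pexp2l rs_pos phi_gt0); rewrite expn1.
  by rewrite (leq_trans (leq_pmulr r s_gt0)) // leq_pmull.
have Fp_natr_eq0 k : (k%:R == 0 :> 'F_p) = (p %| k)%N.
  by rewrite (dvdn_pcharf (pchar_Fp p_pr)).
have [n n_dvd_d /andP[n_neq1 root_l]] :
    exists2 n, (n %| d)%N & (n != 1%N) && root (map_poly intr 'Phi_n) (l%:R : 'F_p).
  apply: unity_root_Cyclotomic d_gt0 _ _.
    by rewrite -natrX -Fp_nat_mod // ld_eq1 Fp_nat_mod.
  have : (l - 1)%:R != 0 :> 'F_p.
    by rewrite Fp_natr_eq0 gtnNdvd ?subn_gt0 // (leq_ltn_trans (leq_subr 1 l)).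
  by rewrite natrB ?(ltnW l_gt1) // subr_eq0.
have rs_eq_l : r%:R / s%:R = l%:R :> 'F_p.
  have s_neq0 : s%:R != 0 :> 'F_p by rewrite Fp_natr_eq0.
  by rewrite -(Fp_nat_mod p_pr r) rs_mod Fp_nat_mod // natrM mulfK.
apply: leq_trans (prime_leq_homog_Cyclotomic (r := r) p_pr n_neq1 p_ndvd_s _) _.
  by rewrite rs_eq_l.
have rs_le : (r + s <= 2 * (r * s))%N.
  by rewrite mul2n -addnn leq_add ?leq_pmulr ?leq_pmull.
apply: leq_trans (leq_pexp2l _ (dvdn_leq_totient d_gt0 n_dvd_d)) _.
  by rewrite addn_gt0 r_gt0.
by rewrite leq_exp2r.
Qed.

End Cyclotomic.

Lemma rho_witness l p : 0 < l ->
  exists r s, [/\ 0 < r, 0 < s, r * s = rho l p & r = l * s %[mod p]].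
Proof.
move=> l_gt0; rewrite /rho.
case: ltnP => [l_pos | l_le0]; last by rewrite leqNgt l_gt0 in l_le0.
case: ex_minnP => n /existsP[r /existsP[s /and4P[r_gt0 s_gt0 /eqP rs_n /eqP rs_mod]]] _.
by exists r, s.
Qed.

Lemma prime_leq_rho_bound p m l :
  prime p -> 0 < (p - 1) %/ m -> 1 < l -> in_Gm m p l ->
  p <= (2 * rho l p) ^ totient ((p - 1) %/ m).
Proof.
move=> p_pr d_gt0 l_gt1 /andP[/andP[_ l_lt_p] /eqP ld_eq1].
have [r [s [r_gt0 s_gt0 <- rs_mod]]] := rho_witness p (ltnW l_gt1).
by apply: (prime_leq_witness_bound (l := l)); rewrite ?l_gt1.
Qed.

Lemma prime_leq_theta_bound p m :
  prime p -> 0 < (p - 1) %/ m -> p <= (2 * theta m p) ^ totient ((p - 1) %/ m).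
Proof.
move=> p_pr d_gt0; have phi_gt0 : 0 < totient ((p - 1) %/ m) by rewrite totient_gt0.
rewrite /theta big_seq_cond.
apply: (big_ind (fun n => p <= (2 * n) ^ totient ((p - 1) %/ m))).
- have p_gt0 := prime_gt0 p_pr.
  apply: leq_trans (leq_pexp2l _ phi_gt0); rewrite ?expn1 ?muln_gt0 ?p_gt0 //.
  by rewrite (leq_trans (leq_pmulr p p_gt0)) // leq_pmull.
- by move=> x y; rewrite /minn; case: ifP.
- move=> l /andP[]; rewrite mem_index_iota => /andP[l_gt1 _].
  exact: prime_leq_rho_bound.
Qed.

Lemma INR_expn n k : INR (n ^ k) = pow (INR n) k.
Proof. by elim: k => [|k IHk] //=; rewrite expnS mult_INR IHk. Qed.

Lemma Rpower_inv_le p k n :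
  0 < p -> 0 < k -> p <= n ^ k -> Rle (Rpower (INR p) (Rinv (INR k))) (INR n).
Proof.
move=> p_gt0 k_gt0 p_le.
have n_gt0 : 0 < n.
  by rewrite lt0n; apply: contraTneq p_le => ->; rewrite exp0n // -ltnNge.
have [p_pos n_pos k_pos] : [/\ Rlt 0 (INR p), Rlt 0 (INR n) & Rlt 0 (INR k)].
  by split; apply/lt_0_INR/ssrnat.ltP.
have -> : INR n = Rpower (INR (n ^ k)) (Rinv (INR k)).
  rewrite INR_expn -Rpower_pow // Rpower_mult Rinv_r ?Rpower_1 //; lra.
apply: Rle_Rpower_l; first by left; apply: Rinv_0_lt_compat.
by split=> //; apply/le_INR/ssrnat.leP.
Qed.

Theorem lemma4p1 :
  exists c : R, Rlt 0 c /\
    forall p m : nat, prime p -> m %| p - 1 -> 2 <= (p - 1) %/ m ->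
      Rle (Rmult c (Rpower (INR p) (Rinv (INR (totient ((p - 1) %/ m)))))) (INR (theta m p)).
Proof.
exists (Rinv 2); split; first lra.
move=> p m p_pr _ d_ge2; have d_gt0 := ltnW d_ge2.
have := Rpower_inv_le (prime_gt0 p_pr) _ (prime_leq_theta_bound p_pr d_gt0).
rewrite totient_gt0 mult_INR /= => /(_ d_gt0); lra.
Qed.
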